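(* In $\mathbb{R}^3$ with coordinates $(x_1,y_1,y_2)$, let $M=\{y_1=y_2=0\}$ (coordinate $x_1$) and $N=\{y_1=0\}$ (coordinates $(x_1,y_2)$). Let $\psi\in C_0^\infty([-1,1])$ be even, $\psi\ge0$, with $\frac{1}{\sqrt{2\pi}}\int_{-1}^1\psi(\theta)\,d\theta=1$, set $\chi(\xi,\eta')=\psi(\eta'/|\xi|)\frac{1}{|\xi|}$, and define for functions $w$ on $M$ $$E(w)(x_1,y_2):=\frac{1}{2\pi}\iint e^{i(\xi x_1+\eta' y_2)}\hat w(\xi)\chi(\xi,\eta')\,d\eta'\,d\xi.$$ Then $E$ is bounded $\dot H^{-1/2}(M)\to L^2(N)$ and bounded $(\dot H^{-1/2}\cap H^{m-1/2})(M)\to H^m(N)$. In addition, if $w\in\dot H^{-3/2}(M)$ then $y_2E(w)\in L^2(N)$, and the map $w\mapsto y_2E(w)$ is bounded $(\dot H^{-3/2}\cap H^{m-3/2})(M)\to H^m(N)$.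
   Context: $\hat w(\xi)=(2\pi)^{-1/2}\int e^{-i\xi x_1}w(x_1)dx_1$. $\dot H^s$ is the homogeneous Sobolev space with norm $\|w\|_{\dot H^s}^2=\int|\xi|^{2s}|\hat w(\xi)|^2d\xi$; $H^s$ is the inhomogeneous Sobolev space with norm $\int(1+|\xi|^2)^s|\hat w|^2d\xi$ (on $N$, with the analogous norm in two variables). $m\ge 0$ is an integer. *)

From HB Require Import structures.
From mathcomp Require Import all_boot all_order all_algebra.
From mathcomp Require Import all_classical all_reals all_analysis.
Set Implicit Arguments. Unset Strict Implicit. Unset Printing Implicit Defensive.
Import Order.TTheory GRing.Theory Num.Theory.
Import numFieldNormedType.Exports.
Local Open Scope classical_set_scope.
Local Open Scope ring_scope.

(* Complex numbers are represented by pairs (real part, imaginary part). *)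
Definition cmod2 {R : realType} (z : R * R) : R := z.1 ^+ 2 + z.2 ^+ 2.

Section Defs.
Variable R : realType.

Definition leb1 := (@lebesgue_measure R).
Definition leb2 := (@lebesgue_measure R \x @lebesgue_measure R)%E.

(* Fourier data on M = R (coordinate x1): w is described by its Fourier
   transform  hat w : R -> C. *)
Definition fmeas (wh : R -> R * R) :=
  measurable_fun setT (fun x => (wh x).1) /\ measurable_fun setT (fun x => (wh x).2).

Definition Hdot_norm2 (s : R) (wh : R -> R * R) : \bar R :=
  (\int[leb1]_xi ((`|xi| `^ (2 * s)) * cmod2 (wh xi))%:E)%E.

Definition H1_norm2 (s : R) (wh : R -> R * R) : \bar R :=
  (\int[leb1]_xi (((1 + xi ^+ 2) `^ s) * cmod2 (wh xi))%:E)%E.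

(* ||f||_{H^s(N)}^2 = \iint (1+|xi|^2+|eta'|^2)^s |hat f(xi,eta')|^2,
   f given by its 2-d Fourier transform fh; L^2(N) = H^0(N) (Plancherel). *)
Definition H2_norm2 (s : R) (fh : R * R -> R * R) : \bar R :=
  (\int[leb2]_p (((1 + p.1 ^+ 2 + p.2 ^+ 2) `^ s) * cmod2 (fh p))%:E)%E.

Definition smooth_supp1 (psi : R -> R) :=
  (forall n x, derivable (derive1n n psi) x 1) /\
  (forall t, 1 < `|t| -> psi t = 0).

Definition chi (psi : R -> R) (xi eta : R) : R := psi (eta / `|xi|) / `|xi|.

(* Fourier transform of E(w): (xi,eta') |-> hat w(xi) chi(xi,eta'),
   since E(w) = (2 pi)^{-1} \iint e^{i(x1 xi + y2 eta')} hat w(xi) chi(xi,eta'). *)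
Definition E_hat (psi : R -> R) (wh : R -> R * R) (p : R * R) : R * R :=
  ((wh p.1).1 * chi psi p.1 p.2, (wh p.1).2 * chi psi p.1 p.2).

(* Fourier transform of y2 E(w): i d/deta' [hat w(xi) chi(xi,eta')]
   = i hat w(xi) (d/deta' chi)(xi,eta');  i (a + i b) c = (-b c) + i (a c). *)
Definition y2E_hat (psi : R -> R) (wh : R -> R * R) (p : R * R) : R * R :=
  let d := derive1 (chi psi p.1) p.2 in
  (- (wh p.1).2 * d, (wh p.1).1 * d).

End Defs.

From HB Require Import structures.
From mathcomp Require Import all_boot all_order all_algebra.
From mathcomp Require Import all_classical all_reals all_analysis.
From mathcomp Require Import measurable_realfun.
From mathcomp Require Import ring lra.
Import Order.TTheory GRing.Theory Num.Theory.
Import numFieldNormedType.Exports.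
Local Open Scope classical_set_scope.
Local Open Scope ring_scope.

(* On the Fourier side, E w and y2 E w are hat w(xi) times a kernel supported
   in the cone |eta'| <= |xi| and bounded by C |xi|^-1 (for chi), resp.
   C |xi|^-2 (for d chi / d eta').  Integrating out eta' over the cone costs a
   factor 2 |xi|, and on the cone 1 + xi^2 + eta'^2 <= 2 (1 + xi^2), so the
   squared H^m(N) norm is bounded by \int (1 + xi^2)^m |xi|^(-2r) |hat w|^2
   up to a constant, with r = 1/2, resp. 3/2.  Splitting at |xi| = 1, this
   weight is at most a constant times |xi|^(-2r) + (1 + xi^2)^(m-r). *)

Section Lemmas.
Context {R : realType}.
Implicit Types (x xi eta r K : R) (wh : R -> R * R).

Lemma cmod2_ge0 (z : R * R) : 0 <= cmod2 z.
Proof. by rewrite /cmod2 addr_ge0 ?sqr_ge0. Qed.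

Lemma measurable_cmod2 wh : fmeas wh -> measurable_fun setT (cmod2 \o wh).
Proof. by case=> m1 m2; apply: measurable_funD; apply: measurable_funX. Qed.

Lemma measurable_Hdot_integrand s wh : fmeas wh ->
  measurable_fun setT (fun x => `|x| `^ s * cmod2 (wh x)).
Proof.
move=> wh_meas; apply: measurable_funM; last exact: measurable_cmod2.
exact: measurableT_comp (measurable_powR _) (@normr_measurable _ _).
Qed.

Lemma measurable_H1_integrand s wh : fmeas wh ->
  measurable_fun setT (fun x => (1 + x ^+ 2) `^ s * cmod2 (wh x)).
Proof.
move=> wh_meas; apply: measurable_funM; last exact: measurable_cmod2.
apply: measurableT_comp (measurable_powR _) _.
by apply: measurable_funD => //; exact: measurable_funX.
Qed.

Lemma powR_mul_self x s : 0 <= x -> s != -1 -> x `^ s * x = x `^ (s + 1).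
Proof.
rewrite le_eqVlt => /predU1P[<- s1|x0 _]; first by rewrite mulr0 powR0 // addr_eq0.
by rewrite powRD ?powRr1 ?ltW //; apply/implyP => _; rewrite gt_eqF.
Qed.

Lemma powR_normN_le {x r} : 1 <= `|x| -> 0 <= r ->
  `|x| `^ (2 * - r) <= 2 `^ r * (1 + x ^+ 2) `^ (- r).
Proof.
move=> x_ge1 r_ge0.
have x2_gt0 : 0 < x ^+ 2 by rewrite -real_normK ?num_real // exprn_gt0 // (lt_le_trans ltr01).
have A_gt0 : 0 < 1 + x ^+ 2 by rewrite addr_gt0.
have A_le : 1 + x ^+ 2 <= 2 * x ^+ 2.
  by rewrite -real_normK ?num_real // mulr2n mulrDl mul1r lerD2r expr_ge1.
rewrite powRrM (powR_mulrn 2) // real_normK ?num_real // !powRN.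
rewrite ler_pdivlMr ?powR_gt0 // mulrC ler_pdivrMr ?powR_gt0 // -powRM ?sqr_ge0 //.
apply: (@ge0_ler_powR R r r_ge0) => //; rewrite nnegrE; first exact: ltW.
by rewrite mulr_ge0 ?sqr_ge0.
Qed.

Lemma sobolev_weight_le x r (m : nat) : 0 <= r ->
  (1 + x ^+ 2) ^+ m * `|x| `^ (2 * - r) <=
  (2 ^+ m + 2 `^ r) * (`|x| `^ (2 * - r) + (1 + x ^+ 2) `^ (m%:R - r)).
Proof.
move=> r0; set A := 1 + x ^+ 2; set p := `|x| `^ _; set q := A `^ _.
have A_ge1 : 1 <= A by rewrite lerDl sqr_ge0.
have A_gt0 : 0 < A := lt_le_trans ltr01 A_ge1.
have p_ge0 : 0 <= p := powR_ge0 _ _.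
have q_ge0 : 0 <= q := powR_ge0 _ _.
have c_ge0 : 0 <= 2 `^ r :> R := powR_ge0 _ _.
have Am_ge0 : 0 <= A ^+ m by rewrite exprn_ge0 // ltW.
have twom_ge0 : 0 <= 2 ^+ m :> R by rewrite exprn_ge0.
case: (ltrP `|x| 1) => [x_lt1|x_ge1].
  have Am_le : A ^+ m <= 2 ^+ m.
    apply: lerXn2r; rewrite ?nnegrE ?(ltW A_gt0) //.
    suff x2_le1 : `|x| ^+ 2 <= 1 by rewrite /A -real_normK ?num_real; lra.
    by rewrite expr_le1 // ltW.
  nra.
have p_le : p <= 2 `^ r * A `^ (- r) := powR_normN_le x_ge1 r0.
have Aq : A ^+ m * (2 `^ r * A `^ (- r)) = 2 `^ r * q.
  rewrite mulrCA -powR_mulrn ?ltW // -powRD //.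
  by apply/implyP => _; rewrite gt_eqF.
have := ler_wpM2l Am_ge0 p_le; rewrite Aq => Ap_le.
nra.
Qed.

Definition cone : set (R * R) := [set p | `|p.2| <= `|p.1|].

Lemma measurable_cone : measurable cone.
Proof.
have := @measurable_fun_ler _ _ _ setT (fun p : R * R => `|p.2|) (fun p : R * R => `|p.1|).
move=> /(_ (measurableT_comp (@normr_measurable _ _) measurable_snd)).
move=> /(_ (measurableT_comp (@normr_measurable _ _) measurable_fst)).
by move=> /(_ measurableT [set true] I); rewrite setTI.
Qed.

Local Open Scope ereal_scope.

Lemma integral_cone (g : R -> R) : measurable_fun setT g -> (forall x, 0 <= g x)%R ->
  \int[@leb2 R]_p (g p.1 * \1_cone p)%:E = \int[@leb1 R]_xi (g xi * (2 * `|xi|))%:E.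
Proof.
move=> g_meas g_ge0; rewrite /leb2 fubini_tonelli1 //; last first.
- by move=> p; rewrite lee_fin mulr_ge0.
- apply/measurable_EFinP; apply: measurable_funM; last exact: measurable_indic measurable_cone.
  exact: measurableT_comp g_meas measurable_fst.
apply: eq_integral => xi _; rewrite /fubini_F /=.
have -> : (fun eta => (g xi * \1_cone (xi, eta))%:E) =
    (fun eta => (g xi)%:E * (\1_`[(- `|xi|)%R, `|xi|%R] eta)%:E).
  apply/funext => eta; rewrite /indic /= -EFinM; congr (_ * _)%:E.
  rewrite (_ : ((xi, eta) \in cone) = (eta \in `[(- `|xi|)%R, `|xi|%R]%classic)) //.
  apply/idP/idP => /set_mem H; apply/mem_set; move: H;
    by rewrite /cone /= in_itv /= -ler_norml.
rewrite ge0_integralZl_EFin //=; last by apply/measurable_EFinP; exact: measurable_indic.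
rewrite integral_indic // setIT.
change ((g xi)%:E * lebesgue_measure [set` `[(- `|xi|)%R, `|xi|%R]] = (g xi * (2 * `|xi|))%:E).
rewrite lebesgue_measure_itv /= lte_fin.
case: ifPn => [_|]; first by rewrite -EFinD -EFinM opprK -mulr2n mulr_natl.
rewrite -leNgt => xi_le; suff -> : (`|xi| = 0)%R by rewrite !mulr0 mule0.
by have := normr_ge0 (xi : R); lra.
Qed.

(* No measurability is needed: for nonnegative functions the integral is a
   supremum over simple minorants. *)
Lemma ge0_le_integral_nonmeas (d : measure_display) (T : measurableType d)
    (mu : {measure set T -> \bar R}) (f g : T -> \bar R) :
  (forall t, 0 <= f t) -> (forall t, f t <= g t) ->
  \int[mu]_t f t <= \int[mu]_t g t.
Proof.
move=> f_ge0 f_le_g.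
have g_ge0 t : 0 <= g t := le_trans (f_ge0 t) (f_le_g t).
rewrite !ge0_integralTE //; apply: ereal_sup_le => _ [h h_le_f <-].
by exists h => //= t; exact: le_trans (h_le_f t) (f_le_g t).
Qed.

Local Close Scope ereal_scope.

Lemma dilated_kernel_sq_le {f : R -> R} {K} {j : nat} : (0 < j)%N ->
    (forall t, f t ^+ 2 <= K) -> (forall t, 1 < `|t| -> f t = 0) ->
  forall xi eta,
  (f (eta / `|xi|) / `|xi| ^+ j) ^+ 2 <= K / `|xi| ^+ (2 * j) * \1_cone (xi, eta).
Proof.
move=> j_gt0 fK f_supp xi eta.
rewrite expr_div_n -exprM mulnC /indic.
have [_|outC] := boolP ((xi, eta) \in cone); rewrite ?mulr1 ?mulr0.
  by rewrite ler_wpM2r ?invr_ge0 ?exprn_ge0.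
have [->|xi_neq0] := eqVneq xi 0.
  by rewrite normr0 expr0n muln_eq0 (negbTE (lt0n_neq0 j_gt0)) invr0 mulr0.
rewrite f_supp ?expr0n ?mul0r // normf_div normr_id ltr_pdivlMr ?normr_gt0 // mul1r.
by move: outC; rewrite notin_setE /cone /= ltNge => /negP.
Qed.

Lemma cone_weight_le (m : nat) xi eta :
  (1 + xi ^+ 2 + eta ^+ 2) ^+ m * \1_cone (xi, eta) <=
  2 ^+ m * (1 + xi ^+ 2) ^+ m * \1_cone (xi, eta).
Proof.
rewrite /indic; have [inC|_] := boolP ((xi, eta) \in cone); rewrite ?mulr0 // !mulr1.
have eta2_le : eta ^+ 2 <= xi ^+ 2.
  rewrite -real_normK ?num_real // -[xi ^+ 2]real_normK ?num_real //.
  by rewrite lerXn2r ?nnegrE //; move: inC => /set_mem.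
rewrite -exprMn; apply: lerXn2r; rewrite ?nnegrE ?mulr_ge0 ?addr_ge0 ?sqr_ge0 //.
have := sqr_ge0 xi; lra.
Qed.

Section ConeKernel.
Context {h : R -> R -> R} {K : R} {j : nat} {r : R}.
Hypotheses (K_ge0 : 0 <= K) (r_def : 2 * r = (2 * j)%:R - 1).
Hypothesis h_sq_le :
  forall xi eta, h xi eta ^+ 2 <= K / `|xi| ^+ (2 * j) * \1_cone (xi, eta).

Lemma H2_integrand_le_cone (m : nat) {wh} {F : R * R -> R * R} :
  (forall p, cmod2 (F p) = cmod2 (wh p.1) * h p.1 p.2 ^+ 2) -> forall xi eta,
  (1 + xi ^+ 2 + eta ^+ 2) ^+ m * cmod2 (F (xi, eta)) <=
  2 ^+ m * K * (1 + xi ^+ 2) ^+ m * `|xi| `^ (- (2 * j)%:R) * cmod2 (wh xi)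
    * \1_cone (xi, eta).
Proof.
move=> cmod2_F xi eta; rewrite cmod2_F /=.
set W := (1 + _ + _) ^+ m; set c := cmod2 (wh xi); set p := `|xi| `^ _; set I := \1_cone _.
have h_le : h xi eta ^+ 2 <= K * p * I by rewrite /p powR_invn // h_sq_le.
have W_ge0 : 0 <= W by rewrite exprn_ge0 ?addr_ge0 ?sqr_ge0.
have c_ge0 : 0 <= c := cmod2_ge0 _.
have cKp_ge0 : 0 <= c * (K * p) by rewrite !mulr_ge0 ?powR_ge0.
apply: le_trans (ler_wpM2l W_ge0 (ler_wpM2l c_ge0 h_le)) _.
have := ler_wpM2r cKp_ge0 (cone_weight_le m xi eta); rewrite -/W -/I => W_le.
rewrite [X in X <= _](_ : _ = W * I * (c * (K * p))); last by ring.
by rewrite [X in _ <= X](_ : _ = 2 ^+ m * (1 + xi ^+ 2) ^+ m * I * (c * (K * p))); last by ring.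
Qed.

Lemma H2_norm2_le_weighted (m : nat) {wh} {F : R * R -> R * R} : fmeas wh ->
  (forall p, cmod2 (F p) = cmod2 (wh p.1) * h p.1 p.2 ^+ 2) ->
  (H2_norm2 m%:R F <= \int[@leb1 R]_xi
     (2 ^+ m * (2 * K) * ((1 + xi ^+ 2) ^+ m * `|xi| `^ (2 * - r) * cmod2 (wh xi)))%:E)%E.
Proof.
move=> wh_meas cmod2_F.
pose g xi := 2 ^+ m * K * (1 + xi ^+ 2) ^+ m * `|xi| `^ (- (2 * j)%:R) * cmod2 (wh xi).
have g_meas : measurable_fun setT g.
  apply: measurable_funM; last exact: measurable_cmod2.
  apply: measurable_funM; last exact: measurableT_comp (measurable_powR _) (@normr_measurable _ _).
  apply: measurable_funM; first exact: measurable_cst.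
  by apply: measurable_funX; apply: measurable_funD => //; exact: measurable_funX.
have g_ge0 xi : 0 <= g xi.
  by rewrite !mulr_ge0 ?exprn_ge0 ?powR_ge0 ?cmod2_ge0 ?addr_ge0 ?sqr_ge0.
have -> : (fun xi => (2 ^+ m * (2 * K) * ((1 + xi ^+ 2) ^+ m * `|xi| `^ (2 * - r) *
    cmod2 (wh xi)))%:E) = (fun xi => (g xi * (2 * `|xi|))%:E).
  apply/funext => xi; congr (_%:E).
  have -> : 2 * - r = - (2 * j)%:R + 1 by rewrite mulrN r_def; ring.
  rewrite -powR_mul_self //; first by rewrite /g; ring.
  by rewrite eqr_opp pnatr_eq1 muln_eq1.
rewrite -integral_cone //; apply: ge0_le_integral_nonmeas => [p|[xi eta]] /=.
  by rewrite lee_fin mulr_ge0 ?powR_ge0 // cmod2_F mulr_ge0 ?cmod2_ge0 ?sqr_ge0.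
rewrite lee_fin powR_mulrn ?addr_ge0 ?sqr_ge0 //.
exact: H2_integrand_le_cone.
Qed.

Lemma H2_norm2_le_Hdot : exists C, 0 <= C /\ forall wh (F : R * R -> R * R), fmeas wh ->
  (forall p, cmod2 (F p) = cmod2 (wh p.1) * h p.1 p.2 ^+ 2) ->
  (H2_norm2 0 F <= C%:E * Hdot_norm2 (- r) wh)%E.
Proof.
exists (2 * K); split=> [|wh F wh_meas cmod2_F]; first by rewrite mulr_ge0.
apply: le_trans (H2_norm2_le_weighted 0 wh_meas cmod2_F) _.
rewrite /Hdot_norm2 -ge0_integralZl_EFin //; last 3 first.
- by move=> x _; rewrite lee_fin mulr_ge0 ?powR_ge0 ?cmod2_ge0.
- by apply/measurable_EFinP; exact: measurable_Hdot_integrand.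
- by rewrite mulr_ge0.
by under [X in (X <= _)%E]eq_integral => x _ do rewrite expr0 !mul1r EFinM.
Qed.

Lemma H2_norm2_le_Hdot_H1 (m : nat) : (0 < j)%N -> exists C, 0 <= C /\
  forall wh (F : R * R -> R * R), fmeas wh ->
  (forall p, cmod2 (F p) = cmod2 (wh p.1) * h p.1 p.2 ^+ 2) ->
  (H2_norm2 m%:R F <= C%:E * (Hdot_norm2 (- r) wh + H1_norm2 (m%:R - r) wh))%E.
Proof.
move=> j_gt0; have r_ge0 : 0 <= r.
  have : 1 <= (2 * j)%:R :> R by rewrite ler1n muln_gt0 j_gt0.
  by rewrite -(pmulr_rge0 _ (ltr0n _ 2)) r_def subr_ge0.
have c_ge0 : 0 <= 2 ^+ m * (2 * K) by rewrite !mulr_ge0 ?exprn_ge0.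
have c'_ge0 : 0 <= 2 ^+ m + 2 `^ r :> R by rewrite addr_ge0 ?exprn_ge0 ?powR_ge0.
exists (2 ^+ m * (2 * K) * (2 ^+ m + 2 `^ r)); split=> [|wh F wh_meas cmod2_F].
  exact: mulr_ge0.
apply: le_trans (H2_norm2_le_weighted m wh_meas cmod2_F) _.
rewrite /Hdot_norm2 /H1_norm2 -ge0_integralD //; last 4 first.
- by move=> x _; rewrite lee_fin mulr_ge0 ?powR_ge0 ?cmod2_ge0.
- by apply/measurable_EFinP; exact: measurable_Hdot_integrand.
- by move=> x _; rewrite lee_fin mulr_ge0 ?powR_ge0 ?cmod2_ge0.
- by apply/measurable_EFinP; exact: measurable_H1_integrand.
rewrite -ge0_integralZl_EFin //; last 3 first.
- by move=> x _; apply: adde_ge0; rewrite lee_fin mulr_ge0 ?powR_ge0 ?cmod2_ge0.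
- by apply: emeasurable_funD; apply/measurable_EFinP;
    [exact: measurable_Hdot_integrand | exact: measurable_H1_integrand].
- by rewrite !mulr_ge0.
apply: ge0_le_integral_nonmeas => x.
  by rewrite lee_fin !mulr_ge0 ?powR_ge0 ?cmod2_ge0 ?exprn_ge0 ?addr_ge0 ?sqr_ge0.
have := ler_wpM2r (cmod2_ge0 (wh x)) (ler_wpM2l c_ge0 (sobolev_weight_le x r m r_ge0)).
by rewrite -EFinD -EFinM lee_fin -mulrDl !mulrA.
Qed.

End ConeKernel.

Lemma continuous_derive1n_smooth n {psi : R -> R} :
  smooth_supp1 psi -> continuous (derive1n n psi).
Proof. by case=> psi_der _ x; apply/differentiable_continuous/derivable1_diffP. Qed.

Lemma derive1_eq0_outside {f : R -> R} : (forall t, 1 < `|t| -> f t = 0) ->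
  forall t, 1 < `|t| -> derive1 f t = 0.
Proof.
move=> f_supp t t_gt1; rewrite derive1E (@near_eq_derive _ _ _ f (cst 0)) ?derive_cst //.
near=> u; apply: f_supp; near: u.
exact: cvgr_gt (@norm_continuous _ R^o t) _ t_gt1.
Unshelve. all: by end_near. Qed.

Lemma sqr_bounded_of_support {f : R -> R} : continuous f ->
  (forall t, 1 < `|t| -> f t = 0) -> exists K, 0 <= K /\ forall t, f t ^+ 2 <= K.
Proof.
move=> f_cont f_supp.
have f2_cont : {within `[-1, 1], continuous (fun t => f t ^+ 2)}.
  by apply: continuous_subspaceT => x; apply: continuousM; exact: f_cont.
have [c _ c_max] := @EVT_max R (fun t => f t ^+ 2) (-1) 1 ltac:(lra) f2_cont.
exists (f c ^+ 2); split=> [|t]; first exact: sqr_ge0.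
have [t_le1|t_gt1] := lerP `|t| 1; first by apply: c_max; rewrite in_itv /= -ler_norml.
by rewrite f_supp // expr0n sqr_ge0.
Qed.

Lemma derive1_chi (psi : R -> R) : (forall x, derivable psi x 1) ->
  forall xi eta, derive1 (chi psi xi) eta = derive1 psi (eta / `|xi|) / `|xi| ^+ 2.
Proof.
move=> psi_der xi eta.
have [->|xi_neq0] := eqVneq xi 0.
  rewrite normr0 expr0n /= invr0 mulr0.
  have -> : chi psi 0 = cst 0 by apply/funext => e; rewrite /chi normr0 invr0 mulr0.
  by rewrite derive1_cst.
set c := `|xi|^-1.
have -> : chi psi xi = c \*: (psi \o (c \*: id)).
  by apply/funext => e; rewrite /chi /= mulrC [e * _]mulrC.
have id_der : is_derive eta 1 (c \*: id) (c *: (1 : R)) := is_deriveZ c (is_derive_id eta 1).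
have psi_der' : is_derive ((c \*: id) eta) 1 psi (derive1 psi ((c \*: id) eta)).
  by rewrite derive1E; apply: derivableP; exact: psi_der.
have chi_der := is_deriveZ c (is_derive1_comp psi_der' id_der).
rewrite derive1E (@derive_val _ _ _ _ _ _ _ chi_der) /= /c.
by rewrite /GRing.scale /= mulr1 [eta / _]mulrC expr2 invfM mulrCA mulrA.
Qed.

Lemma cmod2_E_hat (psi : R -> R) wh p :
  cmod2 (E_hat psi wh p) = cmod2 (wh p.1) * chi psi p.1 p.2 ^+ 2.
Proof. by rewrite /cmod2 /E_hat /=; ring. Qed.

Lemma cmod2_y2E_hat (psi : R -> R) wh p :
  cmod2 (y2E_hat psi wh p) = cmod2 (wh p.1) * derive1 (chi psi p.1) p.2 ^+ 2.
Proof. by rewrite /cmod2 /y2E_hat /=; ring. Qed.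

End Lemmas.

Theorem theorem4 (R : realType) (psi : R -> R) (m : nat) :
  smooth_supp1 psi ->
  (forall t, psi (- t) = psi t) ->
  (forall t, 0 <= psi t) ->
  (\int[@leb1 R]_(t in `[(-1)%R, 1%R]) (psi t)%:E = (Num.sqrt (2 * pi))%:E)%E ->
  (* E : \dot H^{-1/2}(M) -> L^2(N) bounded *)
  (exists C : R, 0 <= C /\ forall wh : R -> R * R, fmeas wh ->
     (Hdot_norm2 (- (1/2)) wh < +oo)%E ->
     (H2_norm2 0 (E_hat psi wh) <= C%:E * Hdot_norm2 (- (1/2)) wh)%E) /\
  (* E : (\dot H^{-1/2} \cap H^{m-1/2})(M) -> H^m(N) bounded *)
  (exists C : R, 0 <= C /\ forall wh : R -> R * R, fmeas wh ->
     (Hdot_norm2 (- (1/2)) wh < +oo)%E ->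
     (H1_norm2 (m%:R - 1/2) wh < +oo)%E ->
     (H2_norm2 m%:R (E_hat psi wh) <=
        C%:E * (Hdot_norm2 (- (1/2)) wh + H1_norm2 (m%:R - 1/2) wh))%E) /\
  (* w in \dot H^{-3/2}(M) -> y2 E(w) in L^2(N) *)
  (forall wh : R -> R * R, fmeas wh ->
     (Hdot_norm2 (- (3/2)) wh < +oo)%E ->
     (H2_norm2 0 (y2E_hat psi wh) < +oo)%E) /\
  (* w |-> y2 E(w) : (\dot H^{-3/2} \cap H^{m-3/2})(M) -> H^m(N) bounded *)
  (exists C : R, 0 <= C /\ forall wh : R -> R * R, fmeas wh ->
     (Hdot_norm2 (- (3/2)) wh < +oo)%E ->
     (H1_norm2 (m%:R - 3/2) wh < +oo)%E ->
     (H2_norm2 m%:R (y2E_hat psi wh) <=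
        C%:E * (Hdot_norm2 (- (3/2)) wh + H1_norm2 (m%:R - 3/2) wh))%E).
Proof.
move=> psi_smooth _ _ _; have [psi_der psi_supp] := psi_smooth.
have [K [K_ge0 psi_le]] :=
  sqr_bounded_of_support (continuous_derive1n_smooth 0 psi_smooth) psi_supp.
have dpsi_supp := derive1_eq0_outside psi_supp.
have [K' [K'_ge0 dpsi_le]] :=
  sqr_bounded_of_support (continuous_derive1n_smooth 1 psi_smooth) dpsi_supp.
have chi_le xi eta : chi psi xi eta ^+ 2 <= K / `|xi| ^+ (2 * 1) * \1_cone (xi, eta)
  := dilated_kernel_sq_le (isT : (0 < 1)%N) psi_le psi_supp xi eta.
have dchi_le xi eta :
    derive1 (chi psi xi) eta ^+ 2 <= K' / `|xi| ^+ (2 * 2) * \1_cone (xi, eta).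
  rewrite derive1_chi; last exact: psi_der 0%N.
  exact: (dilated_kernel_sq_le (f := derive1 psi) (isT : (0 < 2)%N) dpsi_le dpsi_supp).
have r1 : 2 * (1 / 2) = (2 * 1)%:R - 1 :> R by field.
have r3 : 2 * (3 / 2) = (2 * 2)%:R - 1 :> R by field.
have [C1 [C1_ge0 E_L2]] := H2_norm2_le_Hdot K_ge0 r1 chi_le.
have [C2 [C2_ge0 E_Hm]] := H2_norm2_le_Hdot_H1 K_ge0 r1 chi_le m isT.
have [C3 [C3_ge0 y2E_L2]] := H2_norm2_le_Hdot K'_ge0 r3 dchi_le.
have [C4 [C4_ge0 y2E_Hm]] := H2_norm2_le_Hdot_H1 K'_ge0 r3 dchi_le m isT.
split; [|split; [|split]].
- by exists C1; split=> // wh wh_meas _; exact: E_L2 (cmod2_E_hat psi wh).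
- by exists C2; split=> // wh wh_meas _ _; exact: E_Hm (cmod2_E_hat psi wh).
- move=> wh wh_meas wh_fin.
  apply: le_lt_trans (y2E_L2 _ _ wh_meas (cmod2_y2E_hat psi wh)) _.
  exact: lte_mul_pinfty.
- by exists C4; split=> // wh wh_meas _ _; exact: y2E_Hm (cmod2_y2E_hat psi wh).
Qed.
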